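(* Let $R$ be an integral domain. If $R/(u)$ is a coherent ring for every nonzero nonunit $u\in R$, then $R$ is coherent.
   Context: A commutative ring is coherent if every finitely generated ideal is finitely presented. *)

From HB Require Import structures.
From mathcomp Require Import all_boot all_order all_algebra ring_quotient.
From mathcomp Require Import boolp.
Set Implicit Arguments. Unset Strict Implicit. Unset Printing Implicit Defensive.
Import GRing.Theory.
Local Open Scope ring_scope.

Section Coherence.
Variable R : comNzRingType.

Definition fg_ideal (I : R -> Prop) : Prop :=
  exists (n : nat) (a : 'I_n -> R),
    forall x, I x <-> exists c : 'I_n -> R, x = \sum_(i < n) c i * a i.

Definition fp_ideal (I : R -> Prop) : Prop :=
  exists (n : nat) (a : 'I_n -> R),
    (forall x, I x <-> exists c : 'I_n -> R, x = \sum_(i < n) c i * a i) /\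
    exists (m : nat) (b : 'I_m -> 'I_n -> R),
      forall c : 'I_n -> R,
        (\sum_(i < n) c i * a i = 0) <->
        exists d : 'I_m -> R, forall i, c i = \sum_(j < m) d j * b j i.

Definition coherent : Prop := forall I : R -> Prop, fg_ideal I -> fp_ideal I.

End Coherence.

Section PrincipalIdeal.
Variable R : comUnitRingType.
Variable u : R.

(* The
   quotient library only accepts proper ideals, so when u is a unit we use
   the (irrelevant) zero ideal instead; the theorem only uses nonunits u. *)
Definition pideal : pred R := fun x =>
  if u \is a GRing.unit then x == 0 else `[< exists r : R, x = r * u >].

Lemma pideal_closed : idealr_closed pideal.
Proof.
case: (boolP (u \is a GRing.unit)) => Hu.
  split.
  - by rewrite unfold_in /pideal Hu.
  - by rewrite unfold_in /pideal Hu oner_eq0.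
  have Hu1 : GRing.unit_pred u = true := Hu.
  move=> a x y; rewrite !unfold_in Hu1 => /eqP -> /eqP ->.
  by rewrite mulr0 addr0.
have Hu' : (u \is a GRing.unit) = false by apply/negbTE.
split.
- by rewrite unfold_in /pideal Hu'; apply/asboolP; exists 0; rewrite mul0r.
- rewrite unfold_in /pideal Hu'; apply/negP => /asboolP [r Hr].
  have : u \is a GRing.unit by apply/unitrP; exists r; rewrite -Hr mulrC -Hr.
  by rewrite Hu'.
- have Hu1 : GRing.unit_pred u = false := Hu'.
  move=> a x y; rewrite !unfold_in Hu1 => /asboolP [r ->] /asboolP [s ->].
  by apply/asboolP; exists (a * r + s); rewrite mulrDl mulrA.
Qed.

HB.instance Definition _ := isIdealr.Build R pideal pideal_closed.

End PrincipalIdeal.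

Definition quot_by (R : comUnitRingType) (u : R) : comNzRingType :=
  {ideal_quot (pideal u : idealr R)}.

From HB Require Import structures.
From mathcomp Require Import all_boot all_order all_algebra ring_quotient.
From mathcomp Require Import generic_quotient boolp.

(** Let I = (a_0, ..., a_(n-1)) with u := a_i0 <> 0.  The Koszul relations
    u e_k - a_k e_i0 are syzygies of a, and a syzygy whose entries outside
    i0 all lie in (u) is a combination of them (cancel u in the domain).
    If u is a unit this already generates all syzygies.  Otherwise the
    images of a generate a finitely presented ideal of R/(u), so their
    syzygies are generated by finitely many vectors; these lift to syzygies
    of a after correcting the i0-th entry, and every syzygy of a minus a
    combination of the lifts has all entries outside i0 in (u). *)

Set Implicit Arguments.
Unset Strict Implicit.
Unset Printing Implicit Defensive.

Import GRing.Theory.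
Local Open Scope ring_scope.
Local Open Scope quotient_scope.

Section LinearCombinations.
Variable R : comNzRingType.

Definition lcomb n (c a : 'I_n -> R) : R := \sum_(i < n) c i * a i.

Definition gen_ideal n (a : 'I_n -> R) : R -> Prop :=
  fun x => exists c : 'I_n -> R, x = lcomb c a.

Definition generates n (a : 'I_n -> R) (I : R -> Prop) : Prop :=
  forall x, I x <-> gen_ideal a x.

Definition generates_syz n m (b : 'I_m -> 'I_n -> R) (a : 'I_n -> R) : Prop :=
  forall c : 'I_n -> R,
    lcomb c a = 0 <-> exists d : 'I_m -> R, forall i, c i = lcomb d (b^~ i).

Definition fg_syz n (a : 'I_n -> R) : Prop :=
  exists m (b : 'I_m -> 'I_n -> R), generates_syz b a.

Lemma fp_idealP (I : R -> Prop) :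
  fp_ideal I <-> exists n (a : 'I_n -> R), generates a I /\ fg_syz a.
Proof. by []. Qed.

Definition delta n (k : 'I_n) : 'I_n -> R := fun i => (i == k)%:R.
Arguments delta {n} k.

Lemma eq_lcomb n (c1 c2 a1 a2 : 'I_n -> R) :
  c1 =1 c2 -> a1 =1 a2 -> lcomb c1 a1 = lcomb c2 a2.
Proof. by move=> eq_c eq_a; apply: eq_bigr => i _; rewrite eq_c eq_a. Qed.

Lemma lcombC n (c a : 'I_n -> R) : lcomb c a = lcomb a c.
Proof. by apply: eq_bigr => i _; rewrite mulrC. Qed.

Lemma lcomb0r n (c : 'I_n -> R) : lcomb c (fun=> 0) = 0.
Proof. by rewrite /lcomb big1 // => i _; rewrite mulr0. Qed.

Lemma lcomb_delta n (k : 'I_n) (a : 'I_n -> R) : lcomb (delta k) a = a k.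
Proof.
rewrite /lcomb (bigD1 k) //= /delta eqxx mul1r big1 ?addr0 // => i /negbTE ->.
by rewrite mul0r.
Qed.

Lemma lcomb_deltar n (c : 'I_n -> R) (i : 'I_n) : lcomb c (delta^~ i) = c i.
Proof.
by rewrite lcombC -(lcomb_delta i c); apply: eq_lcomb => // k; rewrite /delta eq_sym.
Qed.

Lemma lcombA n m (d : 'I_m -> R) (w : 'I_m -> 'I_n -> R) (a : 'I_n -> R) :
  lcomb (fun i => lcomb d (w^~ i)) a = lcomb d (fun j => lcomb (w j) a).
Proof.
rewrite /lcomb; under eq_bigr do rewrite mulr_suml.
rewrite exchange_big /=; apply: eq_bigr => j _.
by rewrite mulr_sumr; apply: eq_bigr => i _; rewrite mulrA.
Qed.

Lemma lcombBl n (c1 c2 a : 'I_n -> R) :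
  lcomb (fun i => c1 i - c2 i) a = lcomb c1 a - lcomb c2 a.
Proof. by rewrite /lcomb -sumrB; apply: eq_bigr => i _; rewrite mulrBl. Qed.

Lemma lcombBr n (c a1 a2 : 'I_n -> R) :
  lcomb c (fun i => a1 i - a2 i) = lcomb c a1 - lcomb c a2.
Proof. by rewrite !(lcombC c) lcombBl. Qed.

Lemma lcombZl n (r : R) (c a : 'I_n -> R) :
  lcomb (fun i => r * c i) a = r * lcomb c a.
Proof. by rewrite /lcomb mulr_sumr; apply: eq_bigr => i _; rewrite mulrA. Qed.

Lemma lcombZr n (r : R) (c a : 'I_n -> R) :
  lcomb c (fun i => r * a i) = r * lcomb c a.
Proof. by rewrite !(lcombC c) lcombZl. Qed.

Lemma lcombMr n (r : R) (c a : 'I_n -> R) :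
  lcomb c (fun i => a i * r) = lcomb c a * r.
Proof. by rewrite mulrC -lcombZr; apply: eq_lcomb => // i; rewrite mulrC. Qed.

Lemma generates_syzP n m (b : 'I_m -> 'I_n -> R) (a : 'I_n -> R) :
  (forall j, lcomb (b j) a = 0) ->
  (forall c, lcomb c a = 0 -> exists d, forall i, c i = lcomb d (b^~ i)) ->
  generates_syz b a.
Proof.
move=> syz_b span_b c; split; first exact: span_b.
move=> [d c_d]; rewrite (eq_lcomb c_d (frefl a)) lcombA.
by rewrite (eq_lcomb (frefl d) syz_b) lcomb0r.
Qed.

Lemma generators_syz n m (b : 'I_m -> 'I_n -> R) (a : 'I_n -> R) :
  generates_syz b a -> forall j, lcomb (b j) a = 0.
Proof. by move=> gen_b j; apply/gen_b; exists (delta j) => i; rewrite lcomb_delta. Qed.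

Lemma generates_syz0 n (a : 'I_n -> R) :
  (forall i, a i = 0) -> generates_syz delta a.
Proof.
move=> a0; apply: generates_syzP => [j | c _]; first by rewrite lcomb_delta.
by exists c => i; rewrite lcomb_deltar.
Qed.

Definition catf T m1 m2 (f1 : 'I_m1 -> T) (f2 : 'I_m2 -> T) (j : 'I_(m1 + m2)) :=
  match split j with inl j1 => f1 j1 | inr j2 => f2 j2 end.

Lemma catf_apply n m1 m2 (b1 : 'I_m1 -> 'I_n -> R) (b2 : 'I_m2 -> 'I_n -> R) i :
  (catf b1 b2)^~ i =1 catf (b1^~ i) (b2^~ i).
Proof. by move=> j; rewrite /catf; case: split. Qed.

Lemma lcomb_catf m1 m2 (d1 e1 : 'I_m1 -> R) (d2 e2 : 'I_m2 -> R) :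
  lcomb (catf d1 d2) (catf e1 e2) = lcomb d1 e1 + lcomb d2 e2.
Proof.
rewrite /lcomb big_split_ord /catf; congr (_ + _); apply: eq_bigr => j _.
  by rewrite (unsplitK (inl j : 'I_m1 + 'I_m2)).
by rewrite (unsplitK (inr j : 'I_m1 + 'I_m2)).
Qed.

Lemma generates_syz_cat n m1 m2 (b1 : 'I_m1 -> 'I_n -> R)
    (b2 : 'I_m2 -> 'I_n -> R) (a : 'I_n -> R) :
  (forall j, lcomb (b1 j) a = 0) -> (forall j, lcomb (b2 j) a = 0) ->
  (forall c, lcomb c a = 0 -> exists d1 d2,
     forall i, c i = lcomb d1 (b1^~ i) + lcomb d2 (b2^~ i)) ->
  generates_syz (catf b1 b2) a.
Proof.
move=> syz_b1 syz_b2 span_b; apply: generates_syzP => [j | c /span_b [d1 [d2 c_d]]].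
  by rewrite /catf; case: split.
by exists (catf d1 d2) => i; rewrite (eq_lcomb (frefl _) (catf_apply b1 b2 i)) lcomb_catf.
Qed.

Lemma generates_coord n n' (a : 'I_n -> R) (g : 'I_n' -> R) (I : R -> Prop) :
  generates a I -> generates g I ->
  exists e : 'I_n' -> 'I_n -> R, forall k, g k = lcomb (e k) a.
Proof.
move=> gen_a gen_g; apply: (fin_all_exists (P := fun k e => g k = lcomb e a)) => k.
by apply/gen_a/gen_g; exists (delta k); rewrite lcomb_delta.
Qed.

(** Change of generators: if g = e a and a = f g, the syzygies of a are
    generated by the rows of 1 - f e and the relations of g multiplied by e. *)
Lemma fp_ideal_fg_syz n (a : 'I_n -> R) (I : R -> Prop) :
  fp_ideal I -> generates a I -> fg_syz a.
Proof.
move=> /fp_idealP [n' [g [gen_g [m' [b' syz_g]]]]] gen_a.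
have [e g_e] := generates_coord gen_a gen_g.
have [f a_f] := generates_coord gen_g gen_a.
pose b1 i l := delta i l - lcomb (f i) (e^~ l).
pose b2 j l := lcomb (b' j) (e^~ l).
have e_comb (d : 'I_n' -> R) : lcomb (fun l => lcomb d (e^~ l)) a = lcomb d g.
  by rewrite lcombA; apply: eq_lcomb.
exists (n + m'), (catf b1 b2); apply: generates_syz_cat => [i | j | c syz_c].
- by rewrite lcombBl lcomb_delta e_comb -a_f subrr.
- by rewrite e_comb (generators_syz syz_g).
pose c' k := lcomb c (f^~ k).
have [d' c'_d'] : exists d', forall k, c' k = lcomb d' (b'^~ k).
  by apply/syz_g; rewrite lcombA -syz_c; apply: eq_lcomb => // i; rewrite a_f.
exists c, d' => l.
by rewrite lcombBr lcomb_deltar -lcombA (eq_lcomb c'_d' (frefl _)) lcombA subrK.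
Qed.

Lemma fg_ideal_gen n (a : 'I_n -> R) : fg_ideal (gen_ideal a).
Proof. by exists n, a. Qed.

End LinearCombinations.

Arguments delta {R n} k.

Section Quotient.
Variables (R : comUnitRingType) (u : R).

Definition piq (x : R) : quot_by u := \pi_({ideal_quot (pideal u : idealr R)}) x.

Lemma piq0 : piq 0 = 0.
Proof. exact: rmorph0. Qed.

Lemma piqB x y : piq (x - y) = piq x - piq y.
Proof. exact: rmorphB. Qed.

Lemma piq_lcomb n (c a : 'I_n -> R) :
  piq (lcomb c a) = lcomb (piq \o c) (piq \o a).
Proof. by rewrite /piq rmorph_sum; apply: eq_bigr => i _; rewrite rmorphM. Qed.

Lemma piq_repr (y : quot_by u) : piq (repr y) = y.
Proof. exact: reprK. Qed.

Lemma piq_eq0 x : u \isn't a GRing.unit -> piq x = 0 -> exists r, x = r * u.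
Proof.
move=> u_nonunit /eqP; rewrite -piq0 /piq -Quotient.idealrBE subr0.
by rewrite unfold_in /pideal (negbTE u_nonunit) => /asboolP.
Qed.

End Quotient.

Section Koszul.
Variables (R : idomainType) (n : nat) (a : 'I_n -> R) (i0 : 'I_n).
Hypothesis u_neq0 : a i0 != 0.
Local Notation u := (a i0).

Definition koszul (k : 'I_n) : 'I_n -> R := fun i => u * delta k i - a k * delta i0 i.

Lemma koszul_syz k : lcomb (koszul k) a = 0.
Proof. by rewrite lcombBl !lcombZl !lcomb_delta mulrC subrr. Qed.

Lemma lcomb_koszul (s : 'I_n -> R) i :
  lcomb s (koszul^~ i) = u * s i - lcomb s a * delta i0 i.
Proof. by rewrite lcombBr lcombZr lcomb_deltar lcombMr. Qed.

Lemma koszul_span (r s : 'I_n -> R) :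
  lcomb r a = 0 -> (forall i, i != i0 -> r i = s i * u) ->
  forall i, r i = lcomb s (koszul^~ i).
Proof.
move=> syz_r r_s i; rewrite lcomb_koszul.
case: (eqVneq i i0) => [-> | ne]; last first.
  by rewrite /delta (negbTE ne) mulr0 subr0 r_s // mulrC.
have supp_i0 : lcomb (fun k => r k - u * s k) a = (r i0 - u * s i0) * u.
  rewrite /lcomb (bigD1 i0) //= big1 ?addr0 // => k ne.
  by rewrite r_s // (mulrC (s k)) subrr mul0r.
have : (r i0 - u * s i0) * u = - lcomb s a * u.
  by rewrite -supp_i0 lcombBl lcombZl syz_r sub0r mulNr mulrC.
by move/(mulIf u_neq0)/eqP; rewrite subr_eq addrC => /eqP ->; rewrite /delta eqxx mulr1.
Qed.

Lemma koszul_generates_syz : u \is a GRing.unit -> generates_syz koszul a.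
Proof.
move=> u_unit; apply: generates_syzP => [|r syz_r]; first exact: koszul_syz.
by exists (fun i => r i / u); apply: koszul_span => // i _; rewrite divrK.
Qed.

(** A lift of a syzygy of R/(u) combines a to a multiple t u of u = a_i0,
    so subtracting t from its i0-th entry gives a syzygy of a. *)
Lemma syz_lift m (bb : 'I_m -> 'I_n -> quot_by u) :
  u \isn't a GRing.unit -> (forall j, lcomb (bb j) (piq u \o a) = 0) ->
  exists w : 'I_m -> 'I_n -> R, (forall j, lcomb (w j) a = 0) /\
    forall j i, i != i0 -> piq u (w j i) = bb j i.
Proof.
move=> u_nonunit syz_bb.
have /fin_all_exists [t t_w] :
    forall j, exists t, lcomb (fun i => repr (bb j i)) a = t * u.
  move=> j; apply: piq_eq0 => //; rewrite piq_lcomb -(syz_bb j).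
  by apply: eq_lcomb => // i; rewrite /= piq_repr.
exists (fun j i => repr (bb j i) - t j * delta i0 i); split => [j | j i ne].
  by rewrite lcombBl lcombZl lcomb_delta t_w subrr.
by rewrite /delta (negbTE ne) mulr0 subr0 piq_repr.
Qed.

Lemma fg_syz_lift : u \isn't a GRing.unit -> fg_syz (piq u \o a) -> fg_syz a.
Proof.
move=> u_nonunit [m [bb gen_bb]].
have [w [syz_w w_bb]] := syz_lift u_nonunit (generators_syz gen_bb).
exists (m + n), (catf w koszul); apply: generates_syz_cat => // [|c syz_c].
  exact: koszul_syz.
have [dd c_dd] : exists dd, forall i, piq u (c i) = lcomb dd (bb^~ i).
  by apply/(gen_bb (piq u \o c)); rewrite -piq_lcomb syz_c piq0.
pose d j := repr (dd j).
pose r i := c i - lcomb d (w^~ i).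
have syz_r : lcomb r a = 0.
  by rewrite lcombBl lcombA (eq_lcomb (frefl d) syz_w) lcomb0r syz_c subrr.
have /fin_all_exists [s r_s] : forall i, exists s, i != i0 -> r i = s * u.
  move=> i; case: (eqVneq i i0) => [-> | ne]; first by exists 0 => /eqP.
  have [s ->] : exists s, r i = s * u.
    have lift_i : lcomb (piq u \o d) (piq u \o w^~ i) = lcomb dd (bb^~ i).
      by apply: eq_lcomb => j; rewrite /= ?piq_repr ?w_bb.
    by apply: piq_eq0 => //; rewrite piqB piq_lcomb c_dd lift_i subrr.
  by exists s.
by exists d, s => i; rewrite -(koszul_span syz_r r_s) /r addrC subrK.
Qed.

End Koszul.

Theorem lemma4p4 (R : idomainType) :
  (forall u : R, u != 0%R -> u \isn't a GRing.unit -> coherent (quot_by u)) ->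
  coherent R.
Proof.
move=> coh_quot I [n [a gen_a]]; apply/fp_idealP; exists n, a; split=> //.
case: (pickP (fun i => a i != 0)) => [i0 /= u_neq0 | a0]; last first.
  by exists n, delta; apply: generates_syz0 => i; apply/eqP/negbFE/a0.
have [u_unit | u_nonunit] := boolP (a i0 \is a GRing.unit).
  by exists n, (koszul a i0); apply: koszul_generates_syz.
have fp_quot := coh_quot _ u_neq0 u_nonunit _ (fg_ideal_gen (piq (a i0) \o a)).
apply: fg_syz_lift u_neq0 u_nonunit _.
exact: fp_ideal_fg_syz fp_quot (fun _ => iff_refl _).
Qed.
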